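(* At every point $R\in V_N$ with $q(R)>0$, the Cartan tensor $C_{pqr}=\frac12\partial g_{pq}/\partial R^r$ of the Finsleroid metric function satisfies $$C_tC^t=\frac{N^2}{4K^2}\,g^2,$$ and, if $g\neq0$, $$C_{pqr}=\frac1N\Big(h_{pq}C_r+h_{pr}C_q+h_{qr}C_p-\frac{1}{C_sC^s}C_pC_qC_r\Big).$$
   Context: Let $N\ge2$, $V_N=\mathbb{R}^N$ with points $R=(R^1,\dots,R^N)$, $Z=R^N$; indices $a,b$ run over $1,\dots,N-1$, indices $p,q,r,s,t$ over $1,\dots,N$, repeated indices summed. Fix a symmetric positive-definite matrix $(r_{ab})$, $q(R)=\sqrt{r_{ab}R^aR^b}$. Fix $g\in(-2,2)$, $h=\sqrt{1-g^2/4}$, $G=g/h$. Define $B(g;R)=Z^2+gqZ+q^2$, $A(g;R)=Z+\frac12gq$, $\Phi(g;R)=\arctan(A/(hq))$ for $q>0$ ($\Phi=\pm\pi/2$ if $q=0$, $Z\gtrless0$), $J=e^{\frac12G\Phi}$, and $K(g;R)=\sqrt{B}\,J$. Let $g_{pq}=\frac12\partial^2K^2/\partial R^p\partial R^q$ with inverse $g^{pq}$, $R_p=\frac12\partial K^2/\partial R^p$, angular metric tensor $h_{pq}=g_{pq}-R_pR_q/K^2$, $C_p=g^{qr}C_{pqr}$, $C^p=g^{pq}C_q$. *)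

(* R : realType, points of V_N are row vectors 'rV[R]_(n.+1), N = n.+1 *)
From HB Require Import structures.
From mathcomp Require Import all_boot all_order all_algebra.
From mathcomp Require Import all_classical all_reals all_analysis.
Set Implicit Arguments. Unset Strict Implicit. Unset Printing Implicit Defensive.
Import Order.TTheory GRing.Theory Num.Theory.
Import numFieldNormedType.Exports.
Local Open Scope ring_scope.

Section Finsleroid.
Variables (R : realType) (n : nat).
Notation pt := 'rV[R]_(n.+1).

Definition coord (x : pt) (p : 'I_n.+1) : R := x 0 p.
Definition Zc (x : pt) : R := x 0 ord_max.
Definition aidx (a : 'I_n) : 'I_n.+1 := widen_ord (leqnSn n) a.

Definition sym_posdef (r : 'M[R]_n) : Prop :=
  r^T = r /\ forall v : 'rV[R]_n, v != 0 -> 0 < (v *m r *m v^T) 0 0.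

Definition qf (r : 'M[R]_n) (x : pt) : R :=
  Num.sqrt (\sum_(a < n) \sum_(b < n) r a b * x 0 (aidx a) * x 0 (aidx b)).

Definition hh (g : R) : R := Num.sqrt (1 - g ^+ 2 / 4).
Definition GG (g : R) : R := g / hh g.

Definition Bf (r : 'M[R]_n) (g : R) (x : pt) : R :=
  Zc x ^+ 2 + g * qf r x * Zc x + qf r x ^+ 2.
Definition Af (r : 'M[R]_n) (g : R) (x : pt) : R :=
  Zc x + g * qf r x / 2.
Definition Phi (r : 'M[R]_n) (g : R) (x : pt) : R :=
  if 0 < qf r x then atan (Af r g x / (hh g * qf r x))
  else if 0 < Zc x then pi / 2 else - (pi / 2).
Definition Jf (r : 'M[R]_n) (g : R) (x : pt) : R := expR (GG g * Phi r g x / 2).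
Definition Kf (r : 'M[R]_n) (g : R) (x : pt) : R := Num.sqrt (Bf r g x) * Jf r g x.

Definition ev (p : 'I_n.+1) : pt := delta_mx 0 p.
Definition pd (f : pt -> R) (p : 'I_n.+1) : pt -> R := fun x => 'D_(ev p) f x.

Definition K2 r g : pt -> R := fun x => Kf r g x ^+ 2.
Definition gmet r g (x : pt) (p q : 'I_n.+1) : R := pd (pd (K2 r g) q) p x / 2.
Definition gmx r g (x : pt) : 'M[R]_(n.+1) := \matrix_(p, q) gmet r g x p q.
Definition ginv r g (x : pt) : 'M[R]_(n.+1) := invmx (gmx r g x).
Definition Rlow r g (x : pt) (p : 'I_n.+1) : R := pd (K2 r g) p x / 2.
Definition hang r g (x : pt) (p q : 'I_n.+1) : R :=
  gmet r g x p q - Rlow r g x p * Rlow r g x q / K2 r g x.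
Definition Cart r g (x : pt) (p q s : 'I_n.+1) : R :=
  pd (fun y => gmet r g y p q) s x / 2.
Definition Clow r g (x : pt) (p : 'I_n.+1) : R :=
  \sum_(q < n.+1) \sum_(s < n.+1) ginv r g x q s * Cart r g x p q s.
Definition Cup r g (x : pt) (p : 'I_n.+1) : R :=
  \sum_(q < n.+1) ginv r g x p q * Clow r g x q.
Definition Csq r g (x : pt) : R := \sum_(t < n.+1) Clow r g x t * Cup r g x t.

End Finsleroid.

From HB Require Import structures.
From mathcomp Require Import all_boot all_order all_algebra.
From mathcomp Require Import all_classical all_reals all_analysis.
From mathcomp Require Import ring lra.
Import Order.TTheory GRing.Theory Num.Theory.
Import numFieldNormedType.Exports.
Set Implicit Arguments. Unset Strict Implicit. Unset Printing Implicit Defensive.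
Local Open Scope ring_scope.

(* Where q > 0 the metric function satisfies K^2 = B J^2 with J^2 = exp (G Phi) smooth,
   so everything can be differentiated in closed form.  With e = e_N, w_p = r_pb R^b and
   rho the matrix r bordered by zeros, R_p = J^2 (w_p + (Z + g q) e_p) and
   g_pq = J^2 (rho_pq + e_p e_q + (g/B) S_pq) with S a quadratic form in e and w.
   Since (rho + e e^T)^-1 = diag(r^-1, 1) maps w to the horizontal part of R, g^pq is
   J^-2 diag(r^-1, 1) corrected by a quadratic form in e and that horizontal part.
   Differentiating once more and contracting gives C_p = N g / (2B) (q e_p - Z w_p / q),
   hence C_t C^t = N^2 g^2 / (4 B J^2) = N^2 g^2 / (4 K^2); the second identity is then a
   rational identity between these closed forms. *)

Section DirectionalDerivative.
Variables (R : realType) (V : normedModType R).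
Implicit Types (f h : V -> R) (y v : V).
Local Open Scope classical_set_scope.

(* The library rules are stated for [f * h], [f + h], [cst c]; these lambda-term versions
   let derivatives of explicit formulas be assembled by unification. *)
Lemma is_derive_mulf f h y v df dh : is_derive y v f df -> is_derive y v h dh ->
  is_derive y v (fun z => f z * h z) (f y * dh + h y * df).
Proof. by move=> fdf hdh; have := is_deriveM fdf hdh. Qed.

Lemma is_derive_addf f h y v df dh : is_derive y v f df -> is_derive y v h dh ->
  is_derive y v (fun z => f z + h z) (df + dh).
Proof. by move=> fdf hdh; have := is_deriveD fdf hdh. Qed.

Lemma is_derive_subf f h y v df dh : is_derive y v f df -> is_derive y v h dh ->
  is_derive y v (fun z => f z - h z) (df - dh).
Proof. by move=> fdf hdh; have := is_deriveB fdf hdh. Qed.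

Lemma is_derive_sqrf f y v df : is_derive y v f df ->
  is_derive y v (fun z => f z ^+ 2) (2 * f y * df).
Proof.
move=> fdf; have -> : (fun z => f z ^+ 2) = (fun z => f z * f z).
  by apply/funext => z; rewrite expr2.
by apply: is_derive_eq (is_derive_mulf fdf fdf) _; ring.
Qed.

Lemma is_derive_cstf (c : R) y v : is_derive y v (fun _ => c) 0.
Proof. exact: is_derive_cst. Qed.

Lemma is_derive_invf f y v df : is_derive y v f df -> f y != 0 ->
  is_derive y v (fun z => (f z)^-1) (- (f y)^-2 * df).
Proof.
move=> [fder fdf] fy0; apply: DeriveDef; first exact: derivableV.
by rewrite deriveV // fdf.
Qed.

Lemma derive_along_line f y v :
  'D_v f y = 'D_1 (fun t : R => f (t *: v + y)) 0.
Proof.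
rewrite /derive /=; congr (lim (_ @ 0^')); apply/funext => t /=.
by rewrite addr0 scale0r add0r [_%:A]mulr1.
Qed.

Lemma is_derive_comp1 (h : R -> R) f y v dh df :
  is_derive (f y) 1 h dh -> is_derive y v f df ->
  is_derive y v (fun z => h (f z)) (dh * df).
Proof.
move=> hdh [fder fdf].
pose fl t := f (t *: v + y).
have fl_df : is_derive (0 : R) (1 : R) fl df.
  by apply: DeriveDef; [exact: (derivable1P _ _ _).1 fder | rewrite -derive_along_line].
have hdh' : is_derive (fl 0) (1 : R) h dh by rewrite /fl scale0r add0r.
have [hfl_der hfl_d] := is_derive1_comp hdh' fl_df.
by apply: DeriveDef; [exact/derivable1P | rewrite derive_along_line].
Qed.

Lemma is_derive_quadratic f y v c d :
  (forall t : R, f (t *: v + y) = f y + t * c + t ^+ 2 * d) ->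
  is_derive y v f c.
Proof.
move=> fquad.
have E : {near 0^', (fun t => t^-1 *: ((f \o shift y) (t *: v) - f y)) =1
          (fun t => c + t * d)}.
  near=> t => /=.
  have t0 : t != 0 by near: t; exact: nbhs_dnbhs_neq.
  rewrite fquad [_ *: _]/GRing.scale /=; field; exact: t0.
have C : (fun t : R => c + t * d) @ 0^' --> c.
  rewrite -[X in _ --> X]addr0 -[X in _ --> _ + X](mul0r d).
  apply: cvgD; first exact: cvg_cst.
  by apply: cvgM; [apply: cvg_within_filter; exact: cvg_id | exact: cvg_cst].
have C2 : (fun t => t^-1 *: ((f \o shift y) (t *: v) - f y)) @ 0^' --> c.
  by apply: cvg_trans C; apply: near_eq_cvg; near=> t; apply/esym; near: t.
by apply: DeriveDef; [apply/cvg_ex; exists c | exact: cvg_lim].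
Unshelve. all: by end_near. Qed.

End DirectionalDerivative.

Section Sums.
Variables (R : comRingType) (k : nat).
Implicit Types (X Y : 'I_k -> R) (H : 'I_k -> 'I_k -> R).

Definition dot X Y : R := \sum_(t < k) X t * Y t.
Definition bform H X Y : R := \sum_(t < k) \sum_(s < k) H t s * (X t * Y s).

Lemma sum_delta (F : 'I_k -> R) i : \sum_(j < k) (j == i)%:R * F j = F i.
Proof.
rewrite (bigD1 i) //= eqxx mul1r big1 ?addr0 // => j /negbTE ->; exact: mul0r.
Qed.

Lemma dotC X Y : dot X Y = dot Y X.
Proof. by apply: eq_bigr => t _; rewrite mulrC. Qed.

Lemma dot_comb3 (X1 X2 X3 Y1 Y2 Y3 : 'I_k -> R) (a1 a2 a3 b1 b2 b3 : R) :
  dot (fun t => a1 * X1 t + a2 * X2 t + a3 * X3 t) (fun t => b1 * Y1 t + b2 * Y2 t + b3 * Y3 t)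
  = a1 * b1 * dot X1 Y1 + a1 * b2 * dot X1 Y2 + a1 * b3 * dot X1 Y3
  + a2 * b1 * dot X2 Y1 + a2 * b2 * dot X2 Y2 + a2 * b3 * dot X2 Y3
  + a3 * b1 * dot X3 Y1 + a3 * b2 * dot X3 Y2 + a3 * b3 * dot X3 Y3.
Proof. by rewrite /dot !mulr_sumr -!big_split; apply: eq_bigr => t _ /=; ring. Qed.

Lemma trace_comb9 H (M : 'I_k -> 'I_k -> R) (X1 X2 X3 Y1 Y2 Y3 : 'I_k -> R)
  (c11 c12 c13 c21 c22 c23 c31 c32 c33 c0 : R) :
  \sum_(t < k) \sum_(s < k) H t s *
     (c11 * (X1 t * Y1 s) + c12 * (X1 t * Y2 s) + c13 * (X1 t * Y3 s)
    + c21 * (X2 t * Y1 s) + c22 * (X2 t * Y2 s) + c23 * (X2 t * Y3 s)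
    + c31 * (X3 t * Y1 s) + c32 * (X3 t * Y2 s) + c33 * (X3 t * Y3 s)
    + c0 * M t s)
  = c11 * bform H X1 Y1 + c12 * bform H X1 Y2 + c13 * bform H X1 Y3
  + c21 * bform H X2 Y1 + c22 * bform H X2 Y2 + c23 * bform H X2 Y3
  + c31 * bform H X3 Y1 + c32 * bform H X3 Y2 + c33 * bform H X3 Y3
  + c0 * \sum_(t < k) \sum_(s < k) H t s * M t s.
Proof.
rewrite /bform !mulr_sumr -!big_split; apply: eq_bigr => t _ /=.
by rewrite !mulr_sumr -!big_split; apply: eq_bigr => s _ /=; ring.
Qed.

Lemma bform_rank2 (P : 'I_k -> 'I_k -> R) (U E : 'I_k -> R) (c0 c1 c2 c3 : R) X Y :
  bform (fun t s => c0 * (P t s + c1 * U t * U s + c2 * (U t * E s + E t * U s)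
                          + c3 * E t * E s)) X Y
  = c0 * (bform P X Y + c1 * (dot U X * dot U Y) + c2 * (dot U X * dot E Y)
          + c2 * (dot E X * dot U Y) + c3 * (dot E X * dot E Y)).
Proof.
rewrite /bform /dot !big_distrlr /= !mulrDr !mulr_sumr -!big_split.
apply: eq_bigr => t _ /=.
by rewrite ?mulr_sumr -?big_split; apply: eq_bigr => s _ /=; ring.
Qed.

Lemma trace_rank2 (P M : 'I_k -> 'I_k -> R) (U E : 'I_k -> R) (c0 c1 c2 c3 : R) :
  \sum_(t < k) \sum_(s < k)
     c0 * (P t s + c1 * U t * U s + c2 * (U t * E s + E t * U s) + c3 * E t * E s) * M t s
  = c0 * (\sum_(t < k) \sum_(s < k) P t s * M t s
          + c1 * \sum_(t < k) \sum_(s < k) U t * U s * M t s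
          + c2 * \sum_(t < k) \sum_(s < k) U t * E s * M t s
          + c2 * \sum_(t < k) \sum_(s < k) E t * U s * M t s
          + c3 * \sum_(t < k) \sum_(s < k) E t * E s * M t s).
Proof.
rewrite !mulrDr !mulr_sumr -!big_split; apply: eq_bigr => t _ /=.
by rewrite ?mulr_sumr -?big_split; apply: eq_bigr => s _ /=; ring.
Qed.

Lemma bform_dot H X Y : bform H X Y = dot (fun s => dot X (H ^~ s)) Y.
Proof.
rewrite /bform /dot exchange_big; apply: eq_bigr => s _ /=; rewrite mulr_suml.
by apply: eq_bigr => t _; ring.
Qed.

Lemma trace_outer_dot X Y (M : 'I_k -> 'I_k -> R) :
  \sum_(t < k) \sum_(s < k) X t * Y s * M t s = dot X (fun t => dot (M t) Y).
Proof. by apply: eq_bigr => t _; rewrite mulr_sumr; apply: eq_bigr => s _; ring. Qed.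

End Sums.

Section PaddedForms.
Variables (R : realType) (n : nat).
Notation pt := 'rV[R]_(n.+1).
Notation ev := (ev R).
Implicit Types (M : 'M[R]_n) (u z : pt) (p s : 'I_n.+1) (a b : 'I_n).

Definition pform M u z : R :=
  \sum_(a < n) \sum_(b < n) M a b * u 0 (aidx a) * z 0 (aidx b).

Lemma qfE (r : 'M[R]_n) z : qf r z = Num.sqrt (pform r z z). Proof. by []. Qed.

Lemma pformDr M u t z1 z2 : pform M u (t *: z1 + z2) = t * pform M u z1 + pform M u z2.
Proof.
rewrite /pform mulr_sumr -big_split; apply: eq_bigr => a _ /=.
by rewrite mulr_sumr -big_split; apply: eq_bigr => b _ /=; rewrite !mxE; ring.
Qed.

Lemma pformDl M u t z1 z2 : pform M (t *: z1 + z2) u = t * pform M z1 u + pform M z2 u.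
Proof.
rewrite /pform mulr_sumr -big_split; apply: eq_bigr => a _ /=.
by rewrite mulr_sumr -big_split; apply: eq_bigr => b _ /=; rewrite !mxE; ring.
Qed.

Lemma pformC M u z : M^T = M -> pform M u z = pform M z u.
Proof.
move=> Msym; rewrite /pform exchange_big; apply: eq_bigr => a _; apply: eq_bigr => b _ /=.
by rewrite -[in RHS]Msym mxE; ring.
Qed.

Lemma ord_max_or_aidx p : p = ord_max \/ exists a, p = aidx a.
Proof.
case: (unliftP ord_max p) => [a ->|->]; last by left.
by right; exists a; apply: val_inj; rewrite /= /bump leqNgt ltn_ord.
Qed.

Lemma aidx_eqE a b : (aidx a == aidx b) = (a == b).
Proof. by rewrite -val_eqE /= val_eqE. Qed.

Lemma aidx_neq_max a : (aidx a == ord_max) = false.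
Proof. by apply/negbTE; rewrite -val_eqE /= neq_ltn ltn_ord. Qed.

Lemma evE p s : ev p 0 s = (s == p)%:R.
Proof. by rewrite /ev mxE eqxx. Qed.

Lemma pform_evl M a z : pform M (ev (aidx a)) z = \sum_(b < n) M a b * z 0 (aidx b).
Proof.
rewrite /pform -(sum_delta (fun c => \sum_(b < n) M c b * z 0 (aidx b)) a).
apply: eq_bigr => c _; rewrite mulr_sumr; apply: eq_bigr => b _.
by rewrite evE aidx_eqE; ring.
Qed.

Lemma pform_evr M b z : pform M z (ev (aidx b)) = \sum_(a < n) M a b * z 0 (aidx a).
Proof.
rewrite /pform exchange_big /=.
rewrite -(sum_delta (fun c => \sum_(a < n) M a c * z 0 (aidx a)) b).
apply: eq_bigr => c _; rewrite mulr_sumr; apply: eq_bigr => a _.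
by rewrite evE aidx_eqE; ring.
Qed.

Lemma pform_ev M a b : pform M (ev (aidx a)) (ev (aidx b)) = M a b.
Proof.
rewrite pform_evr -[RHS](sum_delta (M ^~ b) a); apply: eq_bigr => c _.
by rewrite evE aidx_eqE mulrC.
Qed.

Lemma pform_evl_max M z : pform M (ev ord_max) z = 0.
Proof.
by rewrite /pform big1 // => a _; rewrite big1 // => b _; rewrite evE aidx_neq_max mulr0 mul0r.
Qed.

Lemma pform_evr_max M z : pform M z (ev ord_max) = 0.
Proof.
by rewrite /pform big1 // => a _; rewrite big1 // => b _; rewrite evE aidx_neq_max mulr0.
Qed.

End PaddedForms.


Section Contractions.
Variables (R : realType) (n : nat) (r : 'M[R]_n) (x : 'rV[R]_(n.+1)).
Hypotheses (rsym : r^T = r) (runit : r \in unitmx).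
Notation ev := (ev R).
Implicit Types (p s : 'I_n.+1) (a b : 'I_n).

(* en is the Kronecker delta at N, rpad is r bordered by a zero last row and column,
   rinvpad = diag(r^-1, 1), rx = r x and xh is x with its last coordinate set to 0. *)
Definition en p : R := ev p 0 ord_max.
Definition rpad p s : R := pform r (ev p) (ev s).
Definition rx p : R := pform r (ev p) x.
Definition xh p : R := x 0 p * (1 - en p).
Definition rinvpad p s : R := pform (invmx r) (ev p) (ev s) + en p * en s.

Lemma en_aidx a : en (aidx a) = 0. Proof. by rewrite /en evE eq_sym aidx_neq_max. Qed.
Lemma en_max : en ord_max = 1. Proof. by rewrite /en evE eqxx. Qed.
Lemma xh_aidx a : xh (aidx a) = x 0 (aidx a). Proof. by rewrite /xh en_aidx subr0 mulr1. Qed.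
Lemma xh_max : xh ord_max = 0. Proof. by rewrite /xh en_max subrr mulr0. Qed.
Lemma rx_max : rx ord_max = 0. Proof. exact: pform_evl_max. Qed.
Lemma rpad_maxl s : rpad ord_max s = 0. Proof. exact: pform_evl_max. Qed.
Lemma rpad_maxr p : rpad p ord_max = 0. Proof. exact: pform_evr_max. Qed.
Lemma rinvpad_aidx a b : rinvpad (aidx a) (aidx b) = invmx r a b.
Proof. by rewrite /rinvpad pform_ev en_aidx mul0r addr0. Qed.
Lemma rinvpad_aidx_max a : rinvpad (aidx a) ord_max = 0.
Proof. by rewrite /rinvpad pform_evr_max en_aidx mul0r addr0. Qed.
Lemma rinvpad_max_aidx a : rinvpad ord_max (aidx a) = 0.
Proof. by rewrite /rinvpad pform_evl_max en_aidx mulr0 addr0. Qed.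
Lemma rinvpad_max : rinvpad ord_max ord_max = 1.
Proof. by rewrite /rinvpad pform_evl_max en_max mulr1 add0r. Qed.

Lemma rpadC p s : rpad p s = rpad s p. Proof. exact: pformC. Qed.

Lemma rinvpadC p s : rinvpad p s = rinvpad s p.
Proof. by rewrite /rinvpad pformC ?trmx_inv ?rsym // mulrC. Qed.

Let xv : 'rV[R]_n := \row_a x 0 (aidx a).

Lemma rx_aidx a : rx (aidx a) = (xv *m r) 0 a.
Proof.
rewrite /rx pform_evl mxE; apply: eq_bigr => b _.
by rewrite mxE -[in RHS]rsym mxE mulrC.
Qed.

Lemma dot_rpad_rinvpad p s : dot (rpad p) (rinvpad ^~ s) = (p == s)%:R - en p * en s.
Proof.
rewrite /dot big_ord_recr /= rpad_maxr mul0r addr0.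
case: (ord_max_or_aidx p) => [->|[a ->]].
  rewrite big1 => [|c _]; last by rewrite rpad_maxl mul0r.
  case: (ord_max_or_aidx s) => [->|[b ->]]; first by rewrite eqxx en_max mulr1 subrr.
  by rewrite eq_sym aidx_neq_max en_aidx mulr0 subrr.
case: (ord_max_or_aidx s) => [->|[b ->]].
  rewrite big1 => [|c _]; last by rewrite rinvpad_aidx_max mulr0.
  by rewrite aidx_neq_max en_aidx mul0r subrr.
rewrite aidx_eqE !en_aidx mulr0 subr0.
have := congr1 (fun M : 'M[R]_n => M a b) (mulmxV runit); rewrite !mxE => <-.
by apply: eq_bigr => c _; rewrite rinvpad_aidx /rpad pform_ev.
Qed.

Lemma dot_rpad_xh p : dot (rpad p) xh = rx p.
Proof.
rewrite /dot big_ord_recr /= rpad_maxr mul0r addr0.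
case: (ord_max_or_aidx p) => [->|[a ->]].
  by rewrite rx_max big1 // => c _; rewrite rpad_maxl mul0r.
rewrite /rx pform_evl; apply: eq_bigr => c _.
by rewrite /rpad pform_ev xh_aidx.
Qed.

Lemma dot_rpad_en p : dot (rpad p) en = 0.
Proof.
by rewrite /dot big_ord_recr /= rpad_maxr mul0r addr0 big1 // => c _; rewrite en_aidx mulr0.
Qed.

Lemma dot_en_rinvpad s : dot en (rinvpad ^~ s) = en s.
Proof.
rewrite /dot big_ord_recr /= en_max mul1r big1 ?add0r => [|c _]; last by rewrite en_aidx mul0r.
case: (ord_max_or_aidx s) => [->|[b ->]]; first by rewrite rinvpad_max en_max.
by rewrite rinvpad_max_aidx en_aidx.
Qed.

Lemma dot_en_xh : dot en xh = 0.
Proof.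
by rewrite /dot big_ord_recr /= xh_max mulr0 addr0 big1 // => c _; rewrite en_aidx mul0r.
Qed.

Lemma dot_en_en : dot en en = 1.
Proof.
by rewrite /dot big_ord_recr /= en_max mulr1 big1 ?add0r // => c _; rewrite en_aidx mul0r.
Qed.

Lemma dot_rx_rinvpad s : dot rx (rinvpad ^~ s) = xh s.
Proof.
rewrite /dot big_ord_recr /= rx_max mul0r addr0.
case: (ord_max_or_aidx s) => [->|[b ->]].
  by rewrite xh_max big1 // => c _; rewrite rinvpad_aidx_max mulr0.
rewrite xh_aidx.
have -> : x 0 (aidx b) = (xv *m r *m invmx r) 0 b by rewrite mulmxK // mxE.
by rewrite mxE; apply: eq_bigr => c _; rewrite rx_aidx rinvpad_aidx.
Qed.

Lemma dot_rx_xh : dot rx xh = pform r x x.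
Proof.
rewrite /dot big_ord_recr /= rx_max mul0r addr0; apply: eq_bigr => a _.
by rewrite /rx pform_evl xh_aidx mulr_suml; apply: eq_bigr => b _; ring.
Qed.

Lemma dot_rx_en : dot rx en = 0.
Proof.
by rewrite /dot big_ord_recr /= rx_max mul0r addr0 big1 // => c _; rewrite en_aidx mulr0.
Qed.

Lemma dot_rinvpad_en s : dot (rinvpad s) en = en s.
Proof.
rewrite dotC -[RHS]dot_en_rinvpad; apply: eq_bigr => t _; by rewrite rinvpadC.
Qed.

Lemma dot_rinvpad_rx s : dot (rinvpad s) rx = xh s.
Proof.
rewrite dotC -[RHS]dot_rx_rinvpad; apply: eq_bigr => t _; by rewrite rinvpadC.
Qed.

Lemma sum_rinvpad_rpad : \sum_(t < n.+1) \sum_(s < n.+1) rinvpad t s * rpad t s = n%:R.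
Proof.
rewrite exchange_big /= (eq_bigr (fun s => 1 - en s * en s)); last first.
  move=> s _; have := dot_rpad_rinvpad s s; rewrite eqxx => <-.
  by apply: eq_bigr => t _; rewrite rpadC mulrC.
by rewrite sumrB -/(dot en en) dot_en_en sumr_const card_ord -[n.+1]addn1 natrD addrK.
Qed.

End Contractions.
Arguments en {R n}.

Section FinsleroidCalculus.
Variables (R : realType) (n : nat) (r : 'M[R]_n) (g : R).
Hypotheses (rsym : r^T = r) (g2 : -2 < g < 2).
Notation pt := 'rV[R]_(n.+1).
Notation q := (qf r).
Notation B := (Bf r g).
Implicit Types (y z v : pt).

Lemma hh_gt0 : 0 < hh g.
Proof.
rewrite /hh sqrtr_gt0; case/andP: g2 => g1 g3.
have : g ^+ 2 < 4 by rewrite expr2; nra.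
lra.
Qed.

Lemma hh_sqr : hh g ^+ 2 = 1 - g ^+ 2 / 4.
Proof. by rewrite /hh sqr_sqrtr // ltW // -sqrtr_gt0 hh_gt0. Qed.

Lemma pform_gt0 z : 0 < q z -> 0 < pform r z z.
Proof. by rewrite qfE sqrtr_gt0. Qed.

Lemma qf_sqr z : 0 < q z -> q z ^+ 2 = pform r z z.
Proof. by move=> qz; rewrite qfE sqr_sqrtr // ltW // pform_gt0. Qed.

Lemma Bf_sum_sqr z : B z = Af r g z ^+ 2 + hh g ^+ 2 * q z ^+ 2.
Proof. by rewrite hh_sqr /Bf /Af; field. Qed.

Lemma Bf_gt0 z : 0 < q z -> 0 < B z.
Proof.
move=> qz; rewrite Bf_sum_sqr ltr_wpDl ?sqr_ge0 //.
by apply: mulr_gt0; apply: exprn_gt0; rewrite ?hh_gt0.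
Qed.

Lemma is_derive_coord c y v : is_derive y v (fun z : pt => z 0 c) (v 0 c).
Proof. by apply: (@is_derive_quadratic _ _ _ _ _ _ 0) => t; rewrite !mxE; ring. Qed.

Lemma is_derive_pformr u y v : is_derive y v (pform r u) (pform r u v).
Proof. by apply: (@is_derive_quadratic _ _ _ _ _ _ 0) => t; rewrite pformDr; ring. Qed.

Lemma is_derive_pform_diag y v : is_derive y v (fun z => pform r z z) (2 * pform r v y).
Proof.
apply: (@is_derive_quadratic _ _ _ _ _ _ (pform r v v)) => t.
by rewrite pformDl !pformDr (pformC y v rsym); ring.
Qed.

Lemma is_derive_qf y v : 0 < q y -> is_derive y v q (pform r v y / q y).
Proof.
move=> qy; apply: is_derive_eq.
  exact: (@is_derive_comp1 _ _ Num.sqrt (fun z => pform r z z) _ _ _ _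
           (is_derive1_sqrt (pform_gt0 qy)) (is_derive_pform_diag y v)).
by rewrite -qfE; field; rewrite gt_eqF.
Qed.

Lemma is_derive_Af y v : 0 < q y ->
  is_derive y v (Af r g) (v 0 ord_max + g * (pform r v y / q y) / 2).
Proof.
move=> qy; apply: is_derive_eq.
  exact: is_derive_addf (is_derive_coord _ _ _)
    (is_derive_mulf (is_derive_mulf (is_derive_cstf g y v) (is_derive_qf v qy))
                    (is_derive_cstf 2^-1 y v)).
by rewrite /=; ring.
Qed.

Lemma is_derive_Bf y v : 0 < q y ->
  is_derive y v B ((2 * Zc y + g * q y) * v 0 ord_max
                   + (g * Zc y + 2 * q y) * (pform r v y / q y)).
Proof.
move=> qy; apply: is_derive_eq.
  exact: is_derive_addf (is_derive_addf (is_derive_sqrf (is_derive_coord _ _ _))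
      (is_derive_mulf (is_derive_mulf (is_derive_cstf _ _ _) (is_derive_qf v qy))
         (is_derive_coord _ _ _)))
    (is_derive_sqrf (is_derive_qf v qy)).
by rewrite /Zc /=; ring.
Qed.

Definition Phi_pos z : R := atan (Af r g z / (hh g * q z)).
Definition Jsq z : R := expR (GG g * Phi_pos z).

Definition dPhi y v : R :=
  hh g * (q y * v 0 ord_max - Zc y * pform r v y / q y) / B y.

Lemma is_derive_Phi_pos y v : 0 < q y -> is_derive y v Phi_pos (dPhi y v).
Proof.
move=> qy; have h0 : hh g != 0 by rewrite gt_eqF ?hh_gt0.
have q0 : q y != 0 by rewrite gt_eqF.
have B0 : B y != 0 by rewrite gt_eqF ?Bf_gt0.
apply: is_derive_eq.
  exact: (@is_derive_comp1 _ _ atan (fun z => Af r g z / (hh g * q z)) _ _ _ _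
           (is_derive1_atan _)
    (is_derive_mulf (is_derive_Af v qy)
       (is_derive_invf (is_derive_mulf (is_derive_cstf _ _ _) (is_derive_qf v qy))
          (mulf_neq0 h0 q0)))).
have -> : 1 + (Af r g y / (hh g * q y)) ^+ 2 = B y / (hh g * q y) ^+ 2.
  by rewrite Bf_sum_sqr; field; rewrite h0 q0.
by rewrite /dPhi /Af; field; rewrite h0 q0 B0.
Qed.

Lemma is_derive_Jsq y v : 0 < q y ->
  is_derive y v Jsq (Jsq y * (g / hh g * dPhi y v)).
Proof.
move=> qy; apply: is_derive_eq.
  exact: (@is_derive_comp1 _ _ expR (fun z => GG g * Phi_pos z) _ _ _ _
           (is_derive_expR _) (is_derive_mulf (is_derive_cstf _ _ _) (is_derive_Phi_pos v qy))).
by rewrite /Jsq /GG /=; ring.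
Qed.

Lemma is_derive_BJsq y v : 0 < q y ->
  is_derive y v (fun z => B z * Jsq z)
    (2 * Jsq y * (pform r v y + (Zc y + g * q y) * v 0 ord_max)).
Proof.
move=> qy; have h0 : hh g != 0 by rewrite gt_eqF ?hh_gt0.
have q0 : q y != 0 by rewrite gt_eqF.
have B0 : B y != 0 by rewrite gt_eqF ?Bf_gt0.
apply: is_derive_eq (is_derive_mulf (is_derive_Bf v qy) (is_derive_Jsq v qy)) _.
by move: B0; rewrite /dPhi /Bf => B0; field; rewrite h0 q0 B0.
Qed.

Lemma pform_continuous y : {for y, continuous (fun z => pform r z z)}.
Proof.
have -> : (fun z => pform r z z) = \sum_(a < n) \sum_(b < n)
    (cst (r a b) * (fun z : pt => z 0 (aidx a)) * (fun z : pt => z 0 (aidx b))).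
  by apply/funext => z; rewrite /pform !fct_sumE; apply: eq_bigr => a _; rewrite fct_sumE.
apply: differentiable_continuous; apply: differentiable_sum => a.
apply: differentiable_sum => b; apply: differentiableM; last exact: differentiable_coord.
by apply: differentiableM; [exact: differentiable_cst | exact: differentiable_coord].
Qed.

Lemma near_qf_gt0 y : 0 < q y -> \forall z \near y, 0 < q z.
Proof.
move=> /pform_gt0 qy.
have := @cvgr_gt _ pt (nbhs y) (nbhs_filter y) _ _ (pform_continuous (y := y)) 0 qy.
by apply: filterS => z; rewrite qfE sqrtr_gt0.
Qed.

Lemma K2E z : 0 < q z -> K2 r g z = B z * Jsq z.
Proof.
move=> qz; rewrite /K2 /Kf /Jf /Phi qz exprMn sqr_sqrtr ?ltW ?Bf_gt0 //.
by rewrite -expRM_natl /Jsq /Phi_pos; congr (_ * expR _); field.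
Qed.

End FinsleroidCalculus.

Section MetricAndCartan.
Variables (R : realType) (n : nat) (r : 'M[R]_n) (g : R).
Hypotheses (rsym : r^T = r) (g2 : -2 < g < 2).
Notation pt := 'rV[R]_(n.+1).
Notation ev := (ev R).
Notation q := (qf r).
Notation B := (Bf r g).
Notation J2 := (Jsq r g).
Implicit Types (y z : pt) (p s t : 'I_n.+1).

Definition dK2 y s : R := 2 * J2 y * (rx r y s + (Zc y + g * q y) * en s).

Definition S_cf y p t : R :=
  q y * (en p * rx r y t + rx r y p * en t) - Zc y / q y * rx r y p * rx r y t
  + q y * (Zc y + g * q y) * en p * en t.

Definition gmet_cf y p t : R := J2 y * (rpad r p t + en p * en t + g / B y * S_cf y p t).

Definition lam y s : R := (q y * en s - Zc y * rx r y s / q y) / B y.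

Definition dS_cf y p t s : R :=
  rx r y s / q y * (en p * rx r y t + rx r y p * en t)
  + q y * (en p * rpad r t s + rpad r p s * en t)
  - (en s / q y - Zc y * rx r y s / q y ^+ 3) * rx r y p * rx r y t
  - Zc y / q y * (rpad r p s * rx r y t + rx r y p * rpad r t s)
  + (rx r y s * Zc y / q y + q y * en s + 2 * g * q y * (rx r y s / q y)) * en p * en t.

Definition Cart_cf y p t s : R :=
  (g * lam y s * gmet_cf y p t
   + J2 y * (- g * ((2 * Zc y + g * q y) * en s + (g * Zc y + 2 * q y) * (rx r y s / q y))
              / B y ^+ 2 * S_cf y p t
            + g / B y * dS_cf y p t s)) / 2.

Lemma pd_K2E y s : 0 < q y -> pd (K2 r g) s y = dK2 y s.
Proof.
move=> qy; rewrite /pd (@near_eq_derive _ _ _ _ (fun z => B z * J2 z)).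
  by have [_ ->] := is_derive_BJsq rsym g2 (ev s) qy.
by near=> z; apply: (K2E g2); near: z; exact: near_qf_gt0.
Unshelve. all: by end_near. Qed.

Lemma is_derive_dK2 y p t : 0 < q y -> is_derive y (ev p) (dK2 ^~ t) (2 * gmet_cf y p t).
Proof.
move=> qy; set v := ev p.
have h0 : hh g != 0 by rewrite gt_eqF ?hh_gt0.
have q0 : q y != 0 by rewrite gt_eqF.
have B0 : B y != 0 by rewrite gt_eqF ?Bf_gt0.
apply: is_derive_eq.
  exact: is_derive_mulf (is_derive_mulf (is_derive_cstf 2 y v) (is_derive_Jsq rsym g2 v qy))
    (is_derive_addf (is_derive_pformr r (ev t) y v)
       (is_derive_mulf (is_derive_addf (is_derive_coord _ y v)
          (is_derive_mulf (is_derive_cstf g y v) (is_derive_qf rsym v qy)))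
        (is_derive_cstf (en t) y v))).
rewrite /gmet_cf /S_cf /dPhi /en /rx /rpad /v /Zc (pformC (ev t) (ev p) rsym).
by move: B0; rewrite /Bf /Zc => B0; field; rewrite h0 q0 B0.
Qed.

Lemma gmetE y p t : 0 < q y -> gmet r g y p t = gmet_cf y p t.
Proof.
move=> qy; rewrite /gmet /pd (@near_eq_derive _ _ _ _ (dK2 ^~ t)); last first.
  by near=> z; apply: pd_K2E; near: z; exact: near_qf_gt0.
by have [_ ->] := is_derive_dK2 p t qy; rewrite mulrC mulKf.
Unshelve. all: by end_near. Qed.

Lemma is_derive_S_cf y p t s : 0 < q y ->
  is_derive y (ev s) (S_cf ^~ p ^~ t) (dS_cf y p t s).
Proof.
move=> qy; set v := ev s.
have q0 : q y != 0 by rewrite gt_eqF.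
have dq := is_derive_qf rsym v qy.
have dZ := is_derive_coord ord_max y v.
have dw u := is_derive_pformr r (ev u) y v.
apply: is_derive_eq.
  exact: is_derive_addf (is_derive_subf
      (is_derive_mulf dq (is_derive_addf (is_derive_mulf (is_derive_cstf (en p) y v) (dw t))
                                          (is_derive_mulf (dw p) (is_derive_cstf (en t) y v))))
      (is_derive_mulf (is_derive_mulf (is_derive_mulf dZ (is_derive_invf dq q0)) (dw p)) (dw t)))
    (is_derive_mulf (is_derive_mulf (is_derive_mulf dq
        (is_derive_addf dZ (is_derive_mulf (is_derive_cstf g y v) dq)))
      (is_derive_cstf (en p) y v)) (is_derive_cstf (en t) y v)).
rewrite /dS_cf /en /rx /rpad /v /Zc (pformC (ev p) (ev s) rsym) (pformC (ev t) (ev s) rsym).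
by field; rewrite q0.
Qed.

Lemma is_derive_gmet_cf y p t s : 0 < q y ->
  is_derive y (ev s) (gmet_cf ^~ p ^~ t) (2 * Cart_cf y p t s).
Proof.
move=> qy; set v := ev s.
have h0 : hh g != 0 by rewrite gt_eqF ?hh_gt0.
have q0 : q y != 0 by rewrite gt_eqF.
have B0 : B y != 0 by rewrite gt_eqF ?Bf_gt0.
have dinvB := is_derive_invf (is_derive_Bf g rsym v qy) B0.
have dgS := is_derive_mulf (is_derive_mulf (is_derive_cstf g y v) dinvB)
                            (is_derive_S_cf p t s qy).
apply: is_derive_eq (is_derive_mulf (is_derive_Jsq rsym g2 v qy)
  (is_derive_addf (is_derive_cstf (rpad r p t + en p * en t) y v) dgS)) _.
rewrite /Cart_cf /gmet_cf /lam /dPhi /en /rx /v.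
by field; rewrite h0 q0 B0.
Qed.

Lemma CartE y p t s : 0 < q y -> Cart r g y p t s = Cart_cf y p t s.
Proof.
move=> qy; rewrite /Cart /pd (@near_eq_derive _ _ _ _ (gmet_cf ^~ p ^~ t)); last first.
  by near=> z; apply: gmetE; near: z; exact: near_qf_gt0.
by have [_ ->] := is_derive_gmet_cf p t s qy; rewrite mulrC mulKf.
Unshelve. all: by end_near. Qed.

End MetricAndCartan.

Section FinsleroidAtPoint.
Variables (R : realType) (n : nat) (r : 'M[R]_n) (g : R) (x : 'rV[R]_(n.+1)).
Hypotheses (rsym : r^T = r) (runit : r \in unitmx) (g2 : -2 < g < 2) (qx : 0 < qf r x).
Notation J2 := (Jsq r g x).
Notation q := (qf r x).
Notation Z := (Zc x).
Notation B := (Bf r g x).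
Notation w := (rx r x).
Notation u := (xh x).
Notation rho := (rpad r).
Notation Pi := (rinvpad r).
Implicit Types (p s t : 'I_n.+1) (X : 'I_n.+1 -> R).

Let J0 : J2 != 0. Proof. by rewrite gt_eqF ?expR_gt0. Qed.
Let q0 : q != 0. Proof. by rewrite gt_eqF. Qed.
Let B0 : B != 0. Proof. by rewrite gt_eqF ?Bf_gt0. Qed.

Definition ginv_c1 : R := g / B * ((Z + g * q) / q).
Definition ginv_c2 : R := - (g / B * q).
Definition ginv_c3 : R := - (g / B * (q * Z)).

Definition ginv_cf p s : R :=
  J2^-1 * (Pi p s + ginv_c1 * u p * u s + ginv_c2 * (u p * en s + en p * u s)
          + ginv_c3 * en p * en s).

Lemma gmx_mul_ginv_cf : gmx r g x *m \matrix_(p, s) ginv_cf p s = 1%:M.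
Proof.
apply/matrixP => p s; rewrite !mxE.
transitivity (dot
  (fun t => J2 * rho p t + J2 * (en p + g / B * (q * w p + q * (Z + g * q) * en p)) * en t
            + J2 * (g / B * (q * en p - Z / q * w p)) * w t)
  (fun t => J2^-1 * Pi t s + J2^-1 * (ginv_c1 * u s + ginv_c2 * en s) * u t
            + J2^-1 * (ginv_c2 * u s + ginv_c3 * en s) * en t)).
  apply: eq_bigr => t _; rewrite !mxE gmetE // /gmet_cf /S_cf /ginv_cf /ginv_c1 /ginv_c2 /ginv_c3.
  by field; rewrite J0 q0 B0.
rewrite dot_comb3 dot_rpad_rinvpad // dot_rpad_xh dot_rpad_en dot_en_rinvpad dot_en_xh.
rewrite dot_en_en dot_rx_rinvpad // dot_rx_xh dot_rx_en -qf_sqr //.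
have B0' := B0; rewrite /ginv_c1 /ginv_c2 /ginv_c3 /Bf in B0' *.
by field; rewrite J0 q0 B0'.
Qed.

Lemma ginvE p s : ginv r g x p s = ginv_cf p s.
Proof.
have [gunit _] := mulmx1_unit gmx_mul_ginv_cf.
by rewrite /ginv -[invmx _]mulmx1 -gmx_mul_ginv_cf mulmxA mulVmx // mul1mx mxE.
Qed.

Lemma bform_rinvpad_rpad p X : bform Pi (rho p) X = X p - en p * dot en X.
Proof.
rewrite bform_dot; transitivity (\sum_s ((p == s)%:R * X s - en p * (en s * X s))).
  by apply: eq_bigr => s _; rewrite dot_rpad_rinvpad //; ring.
rewrite sumrB -mulr_sumr -[X p](sum_delta X p); congr (_ - _).
by apply: eq_bigr => s _; rewrite eq_sym.
Qed.

Lemma bform_rinvpad_en X : bform Pi en X = dot en X.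
Proof. by rewrite bform_dot; apply: eq_bigr => s _; rewrite dot_en_rinvpad. Qed.

Lemma bform_rinvpad_rx X : bform Pi w X = dot u X.
Proof. by rewrite bform_dot; apply: eq_bigr => s _; rewrite dot_rx_rinvpad. Qed.

Lemma trace_rpad_xh X : \sum_(t < n.+1) \sum_(s < n.+1) X t * u s * rho t s = dot X w.
Proof. by rewrite trace_outer_dot; apply: eq_bigr => t _; rewrite dot_rpad_xh. Qed.

Lemma trace_rpad_en X : \sum_(t < n.+1) \sum_(s < n.+1) X t * en s * rho t s = 0.
Proof. by rewrite trace_outer_dot; apply: big1 => t _; rewrite dot_rpad_en mulr0. Qed.

Section CartanExpansion.
Variable p : 'I_n.+1.

(* Cart_cf x p t s = (g lam_s g_pt + J2 (kappa_s S_pt + (g/B) dS_pts)) / 2 with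
   lam = mue e + muw w, g_p. = J2 rho_p. + gae e + gaw w, S_p. = sie e + siw w and
   kappa = kae e + kaw w (DD = J2 g / 2B); below it is expanded on products of e, w, rho. *)
Let mue := q / B.
Let muw := - (Z / (q * B)).
Let gae := J2 * (en p + g / B * (q * w p + q * (Z + g * q) * en p)).
Let gaw := J2 * (g / B * (q * en p - Z / q * w p)).
Let sie := q * w p + q * (Z + g * q) * en p.
Let siw := q * en p - Z / q * w p.
Let kae := - (g * (2 * Z + g * q) / B ^+ 2).
Let kaw := - (g * (g * Z + 2 * q) / (q * B ^+ 2)).
Let DD := J2 * g / (2 * B).

Lemma Cart_cf_expand t s : Cart_cf r g x p t s =
    g / 2 * J2 * mue * (rho p t * en s) + g / 2 * J2 * muw * (rho p t * w s)
  + 0 * (rho p t * rho p s)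
  + (g / 2 * gae * mue + J2 / 2 * sie * kae + DD * q * en p) * (en t * en s)
  + (g / 2 * gae * muw + J2 / 2 * sie * kaw + DD * (w p / q + en p * (Z / q + 2 * g)))
      * (en t * w s)
  + DD * q * (en t * rho p s)
  + (g / 2 * gaw * mue + J2 / 2 * siw * kae - DD * w p / q) * (w t * en s)
  + (g / 2 * gaw * muw + J2 / 2 * siw * kaw + DD * (en p / q + Z * w p / q ^+ 3))
      * (w t * w s)
  + - (DD * Z / q) * (w t * rho p s)
  + DD * (q * en p - Z / q * w p) * rho t s.
Proof.
rewrite /Cart_cf /gmet_cf /S_cf /dS_cf /lam /mue /muw /gae /gaw /sie /siw /kae /kaw /DD.
by rewrite (rpadC rsym t s); field; rewrite q0 B0.
Qed.

Lemma ClowE : Clow r g x p = (n.+1)%:R * g / 2 * lam r g x p.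
Proof.
rewrite /Clow.
under eq_bigr => t _ do under eq_bigr => s _ do rewrite ginvE // CartE // Cart_cf_expand.
rewrite trace_comb9 /ginv_cf !bform_rank2 trace_rank2 sum_rinvpad_rpad //.
rewrite !trace_rpad_xh !trace_rpad_en !bform_rinvpad_rpad !bform_rinvpad_en !bform_rinvpad_rx.
rewrite !(dotC u) !(dotC en (rho p)) !(dotC en w).
rewrite dot_rpad_xh dot_rpad_en dot_en_xh dot_rx_xh dot_rx_en dot_en_en -qf_sqr //.
have B0' := B0; rewrite /lam /mue /muw /gae /gaw /sie /siw /kae /kaw /DD.
rewrite /ginv_c1 /ginv_c2 /ginv_c3 -[n.+1]addn1 natrD /Bf in B0' *.
by field; rewrite J0 q0 B0'.
Qed.

End CartanExpansion.

Let Nhg := (n.+1)%:R * g / 2.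
Let Clow_e := Nhg * (q / B).
Let Clow_w := - (Nhg * (Z / (q * B))).
Let Cup_e := Nhg / (J2 * B) * (q - ginv_c2 * Z * q + ginv_c3 * q).
Let Cup_u := Nhg / (J2 * B) * (- (Z / q) - ginv_c1 * Z * q + ginv_c2 * q).

Lemma Clow_lin t : Clow r g x t = Clow_e * en t + Clow_w * w t.
Proof. by rewrite ClowE /lam /Clow_e /Clow_w /Nhg; field; rewrite q0 B0. Qed.

Lemma CupE p : Cup r g x p = Cup_e * en p + Cup_u * u p.
Proof.
transitivity (dot
  (fun t => J2^-1 * Pi p t + J2^-1 * (ginv_c1 * u p + ginv_c2 * en p) * u t
            + J2^-1 * (ginv_c2 * u p + ginv_c3 * en p) * en t)
  (fun t => Clow_e * en t + Clow_w * w t + 0 * en t)).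
  by apply: eq_bigr => t _; rewrite ginvE Clow_lin /ginv_cf; ring.
rewrite dot_comb3 dot_rinvpad_en // dot_rinvpad_rx // !(dotC u) (dotC en w).
rewrite dot_en_xh dot_rx_xh dot_en_en dot_rx_en -qf_sqr //.
by rewrite /Cup_e /Cup_u /Clow_e /Clow_w; field; rewrite J0 q0 B0.
Qed.

Lemma CsqE : Csq r g x = (n.+1)%:R ^+ 2 / (4 * (B * J2)) * g ^+ 2.
Proof.
transitivity (dot (fun t => Clow_e * en t + Clow_w * w t + 0 * en t)
                  (fun t => Cup_e * en t + Cup_u * u t + 0 * en t)).
  by apply: eq_bigr => t _; rewrite Clow_lin CupE; ring.
rewrite dot_comb3 dot_en_en dot_en_xh dot_rx_en dot_rx_xh -qf_sqr //.
have B0' := B0; rewrite /Cup_e /Cup_u /Clow_e /Clow_w /Nhg /ginv_c1 /ginv_c2 /ginv_c3 /Bf in B0' *.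
by field; rewrite J0 q0 B0'.
Qed.

End FinsleroidAtPoint.

Lemma sym_posdef_unitmx (R : realType) (n : nat) (r : 'M[R]_n) :
  sym_posdef r -> r \in unitmx.
Proof.
move=> [_ rpos]; rewrite unitmxE unitfE; apply/negP => /det0P [v v0 vr].
by have := rpos v v0; rewrite vr mul0mx mxE ltxx.
Qed.

Theorem theorem2p1 (R : realType) (n : nat) (r : 'M[R]_n) (g : R) (x : 'rV[R]_(n.+1)) :
  (1 <= n)%N -> sym_posdef r -> -2 < g < 2 -> 0 < qf r x ->
  Csq r g x = (n.+1)%:R ^+ 2 / (4 * Kf r g x ^+ 2) * g ^+ 2 /\
  (g != 0 -> forall p q s : 'I_n.+1,
     Cart r g x p q s =
       (n.+1)%:R^-1 * (hang r g x p q * Clow r g x s + hang r g x p s * Clow r g x q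
                       + hang r g x q s * Clow r g x p
                       - (Csq r g x)^-1 * (Clow r g x p * Clow r g x q * Clow r g x s))).
Proof.
(* 1 <= n is implied by 0 < qf r x. *)
move=> _ rdef g2 qx; have runit := sym_posdef_unitmx rdef; have [rsym _] := rdef.
have K2x : Kf r g x ^+ 2 = Bf r g x * Jsq r g x by exact: K2E.
split; first by rewrite CsqE // K2x.
move=> g0 p t s.
have J0 : Jsq r g x != 0 by rewrite gt_eqF ?expR_gt0.
have q0 : qf r x != 0 by rewrite gt_eqF.
have B0 : Bf r g x != 0 by rewrite gt_eqF ?Bf_gt0.
have N0 : n%:R + 1 != 0 :> R by rewrite natr1 pnatr_eq0.
rewrite /hang /Rlow !gmetE // !pd_K2E // K2E // !ClowE // CsqE // CartE //.
rewrite /Cart_cf /gmet_cf /S_cf /dS_cf /lam /dK2 -[n.+1]addn1 natrD.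
by rewrite /Bf in B0 *; field; rewrite J0 q0 B0 N0 g0.
Qed.
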